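(* Let ${\cal K}$ be a closed simplicial complex of dimension $n\ge 3$ with skeleton $G$. (i) If ${\cal K}$ has an $(n-2)$-face $F$ that belongs to at least five $n$-faces and whose link is a single cycle which is an isometric subgraph of $G$ (distances in the cycle equal distances in $G$), then $G$ is not embeddable up to any scale into a hypercube. (ii) If ${\cal K}$ is strongly connected and of type $\{3,4\}$, then $G$ is embeddable up to some scale into a hypercube.
   Context: An (abstract) simplicial complex of dimension $n$ is a family of finite nonempty sets closed under taking nonempty subsets and under nonempty intersections, whose maximal members ($n$-faces) all have cardinality $n+1$. It is closed if every $(n-1)$-face lies in exactly two $n$-faces, and strongly connected if any two $n$-faces can be joined by a sequence of $n$-faces in which consecutive ones share an $(n-1)$-face. For an $(n-2)$-face $F$, every $n$-face $F'\supseteq F$ is $F\cup e$ for a unique $2$-set $e$; the link of $F$ is the graph formed by these edges $e$. The complex is of type $\{3,4\}$ if every $(n-2)$-face lies in exactly $3$ or $4$ $n$-faces. The skeleton is the graph on the vertices with adjacency given by $1$-faces. A connected graph $G$ with path metric $d_G$ is embeddable up to scale $\lambda$ into a hypercube if there is a map $\phi:V(G)\to\{0,1\}^N$ with Hamming distance $|\phi(i)-\phi(j)|=\lambda\, d_G(i,j)$ for all vertices $i,j$. *)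

From mathcomp Require Import all_boot.
Set Implicit Arguments. Unset Strict Implicit. Unset Printing Implicit Defensive.

Section Complexes.
Variable T : finType.

Definition is_complex (n : nat) (K : {set {set T}}) : Prop :=
  [/\ K != set0,
      set0 \notin K,
      forall A B : {set T}, A \in K -> B \subset A -> B != set0 -> B \in K,
      forall A B : {set T}, A \in K -> B \in K -> A :&: B != set0 -> A :&: B \in K
    & forall A : {set T}, A \in K -> (forall B : {set T}, B \in K -> A \subset B -> B = A) ->
        #|A| = n.+1].

Definition kfaces (K : {set {set T}}) (k : nat) : {set {set T}} :=
  [set A in K | #|A| == k.+1].

Definition star (K : {set {set T}}) (n : nat) (F : {set T}) : {set {set T}} :=
  [set A in kfaces K n | F \subset A].

Definition closed_complex (n : nat) (K : {set {set T}}) : Prop :=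
  forall F : {set T}, F \in kfaces K n.-1 -> #|star K n F| = 2.

(* strongly connected: n-faces joined by chains of n-faces, consecutive ones
   sharing an (n-1)-face (i.e. having at least n common vertices) *)
Definition facet_adj (n : nat) (K : {set {set T}}) : rel {set T} :=
  fun A B => [&& A \in kfaces K n, B \in kfaces K n & n <= #|A :&: B|].

Definition strongly_connected (n : nat) (K : {set {set T}}) : Prop :=
  forall A B : {set T}, A \in kfaces K n -> B \in kfaces K n ->
    connect (facet_adj n K) A B.

Definition type34 (n : nat) (K : {set {set T}}) : Prop :=
  forall F : {set T}, F \in kfaces K (n - 2) -> #|star K n F| = 3 \/ #|star K n F| = 4.

Definition vertex (K : {set {set T}}) (x : T) : bool := [set x] \in K.

Definition skel (K : {set {set T}}) : rel T :=
  fun x y => (x != y) && ([set x; y] \in K).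

Definition link (n : nat) (K : {set {set T}}) (F : {set T}) : rel T :=
  fun x y => [&& x != y, x \notin F, y \notin F & F :|: [set x; y] \in kfaces K n].

Definition is_dist (e : rel T) (x y : T) (k : nat) : Prop :=
  (exists2 p : seq T, path e x p & (last x p == y) && (size p == k)) /\
  (forall p : seq T, path e x p -> last x p = y -> k <= size p).

Definition is_cycle_graph (e : rel T) (c : seq T) : Prop :=
  [/\ uniq c, 3 <= size c &
      forall x y, e x y = (x \in c) && ((y == next c x) || (x == next c y))].

Definition isometric_in_skel (K : {set {set T}}) (e : rel T) (c : seq T) : Prop :=
  forall x y k, x \in c -> y \in c -> is_dist e x y k -> is_dist (skel K) x y k.

Definition skel_connected (K : {set {set T}}) : Prop :=
  forall x y, vertex K x -> vertex K y -> connect (skel K) x y.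

Definition hamming (N : nat) (u v : {ffun 'I_N -> bool}) : nat :=
  #|[set i | u i != v i]|.

Definition embeddable (K : {set {set T}}) (lam : nat) : Prop :=
  skel_connected K /\
  exists (N : nat) (phi : T -> {ffun 'I_N -> bool}),
    forall x y k, vertex K x -> vertex K y -> is_dist (skel K) x y k ->
      hamming (phi x) (phi y) = lam * k.

End Complexes.

From mathcomp Require Import all_boot zify.
Set Implicit Arguments. Unset Strict Implicit. Unset Printing Implicit Defensive.

(* (i) The vertices of F (at least two) are adjacent to each other and to every
   vertex of the link cycle, which has at least five vertices.  If it has exactly
   five, these seven vertices violate a hypermetric inequality satisfied by all
   Hamming distances; if it has more, two cycle vertices at distance 3 in the link
   have a common neighbour in F, contradicting isometry.
   (ii) Propagating along strong connectivity, with the type {3,4} condition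
   closing up the stars of (n-2)-faces, every vertex lies in each facet A or in a
   facet meeting A in a ridge.  Closedness then forces every vertex to have at most
   one non-neighbour, and non-adjacent vertices to have a common neighbour.  Such a
   graph embeds into the cube of all boolean functions f on the vertices with scale
   2^(|T|-1), by x |-> (f |-> f (rep x) xor [x <> rep x]), where rep picks one
   vertex of each pair of non-neighbours: non-neighbours are mapped to opposite
   points, neighbours to points differing in half of the coordinates. *)

Section Distance.
Variables (T : finType) (e : rel T).

Lemma is_dist_uniq x y k1 k2 : is_dist e x y k1 -> is_dist e x y k2 -> k1 = k2.
Proof.
move=> [[p1 p1e /andP [/eqP l1 /eqP s1]] min1] [[p2 p2e /andP [/eqP l2 /eqP s2]] min2].
by apply/eqP; rewrite eqn_leq (leq_trans (min1 _ p2e l2)) ?s2 // -s1 min2.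
Qed.

Lemma is_dist0 x : is_dist e x x 0.
Proof. by split=> [|p _ _ //]; exists [::]; rewrite /= ?eqxx. Qed.

Lemma is_dist1 x y : x != y -> e x y -> is_dist e x y 1.
Proof.
move=> xy exy; split; first by exists [:: y]; rewrite /= ?exy ?eqxx.
by case=> [_ /= yx|//]; rewrite yx eqxx in xy.
Qed.

Lemma is_dist2 x y z : x != y -> ~~ e x y -> e x z -> e z y -> is_dist e x y 2.
Proof.
move=> xy nexy exz ezy; split; first by exists [:: z; y]; rewrite /= ?exz ?ezy ?eqxx.
case=> [_ /= yx|w [|w' p]] //=; first by rewrite yx eqxx in xy.
by rewrite andbT => exw wy; rewrite -wy exw in nexy.
Qed.

Lemma is_dist3 x y z1 z2 : x != y -> ~~ e x y -> (forall z, e x z -> ~~ e z y) ->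
  e x z1 -> e z1 z2 -> e z2 y -> is_dist e x y 3.
Proof.
move=> xy nexy nomid exz1 ez12 ez2y.
split; first by exists [:: z1; z2; y]; rewrite /= ?exz1 ?ez12 ?ez2y ?eqxx.
case=> [_ /= yx|w [|w' [|w'' p]]] //=; first by rewrite yx eqxx in xy.
  by rewrite andbT => exw wy; rewrite -wy exw in nexy.
by rewrite andbT => /andP [exw eww'] w'y; move: (nomid _ exw); rewrite -w'y eww'.
Qed.

End Distance.

Lemma hammingE N (u v : {ffun 'I_N -> bool}) : hamming u v = \sum_(i < N) (u i != v i).
Proof.
rewrite /hamming -sum1_card big_mkcond /=; apply: eq_bigr => i _.
by rewrite inE; case: (u i != v i).
Qed.

Lemma hammingC N (u v : {ffun 'I_N -> bool}) : hamming u v = hamming v u.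
Proof. by apply: eq_card => i; rewrite !inE eq_sym. Qed.

(* A hypermetric inequality: it holds coordinatewise for 0/1-vectors. *)
Lemma hamming_pentagon N (p1 p2 q0 q1 q2 q3 q4 : {ffun 'I_N -> bool}) :
  hamming p1 p2 +
    (hamming q0 q2 + hamming q1 q3 + hamming q2 q4 + hamming q3 q0 + hamming q4 q1)
  <= hamming p1 q0 + hamming p1 q1 + hamming p1 q2 + hamming p1 q3 + hamming p1 q4 +
     hamming p2 q0 + hamming p2 q1 + hamming p2 q2 + hamming p2 q3 + hamming p2 q4.
Proof.
rewrite !hammingE -!big_split /=; apply: leq_sum => i _.
by case: (p1 i); case: (p2 i); case: (q0 i); case: (q1 i); case: (q2 i); case: (q3 i);
  case: (q4 i).
Qed.

Section BooleanFunctions.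
Variable T : finType.

Definition flip_at (a : T) (f : {ffun T -> bool}) : {ffun T -> bool} :=
  [ffun x => if x == a then ~~ f x else f x].

Lemma flip_atK a : involutive (flip_at a).
Proof. by move=> f; apply/ffunP => x; rewrite !ffunE; case: eqP => // _; rewrite negbK. Qed.

Lemma card_xor_eq (a b : T) c : a != b ->
  #|[set f : {ffun T -> bool} | (f a (+) f b) == c]| * 2 = 2 ^ #|T|.
Proof.
move=> ab; have ba : b != a by rewrite eq_sym.
set S := [set f : {ffun T -> bool} | (f a (+) f b) == c].
have flipS : flip_at a @: S = ~: S.
  apply/setP => f; rewrite !inE; apply/imsetP/idP.
    case=> g; rewrite inE => /eqP <- ->; rewrite !ffunE eqxx (negbTE ba).
    by case: (g a); case: (g b).
  move=> Sf; exists (flip_at a f); last by rewrite flip_atK.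
  rewrite inE !ffunE eqxx (negbTE ba); move: Sf.
  by case: (f a); case: (f b); case: (c : bool).
have := cardsC S; rewrite -flipS (card_imset _ (can_inj (flip_atK a))).
by rewrite card_ffun card_bool muln2 -addnn.
Qed.

Lemma card_enum_val (P : pred {ffun T -> bool}) :
  #|[set i : 'I_#|{ffun T -> bool}| | P (enum_val i)]| = #|[set f | P f]|.
Proof.
rewrite -(card_imset _ enum_val_inj); apply: eq_card => f; rewrite inE.
apply/imsetP/idP => [[i]|Pf]; first by rewrite inE => Pi ->.
by exists (enum_rank f); rewrite ?inE enum_rankK.
Qed.

End BooleanFunctions.

Lemma mem_set_neq (T : finType) (A B : {set T}) x : x \in A -> x \notin B -> A != B.
Proof. by move=> xA; apply: contraNneq => <-. Qed.

Section Complex.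
Variables (T : finType) (n : nat) (K : {set {set T}}).
Hypothesis cK : is_complex n K.

Lemma face_sub (A B : {set T}) : A \in K -> B \subset A -> B != set0 -> B \in K.
Proof. by case: cK => _ _ subK _ _; apply: subK. Qed.

Lemma kfaces_card (A : {set T}) k : A \in kfaces K k -> #|A| = k.+1.
Proof. by rewrite inE => /andP [_ /eqP]. Qed.

Lemma kfaces_face (A : {set T}) k : A \in kfaces K k -> A \in K.
Proof. by rewrite inE => /andP []. Qed.

Lemma kfaces_sub (A B : {set T}) k : A \in K -> B \subset A -> #|B| = k.+1 ->
  B \in kfaces K k.
Proof.
move=> AK BA cB; rewrite inE cB eqxx andbT.
by apply: face_sub AK BA _; rewrite -card_gt0 cB.
Qed.

Lemma kfaces_D1 (A : {set T}) k a : A \in kfaces K k.+1 -> a \in A -> A :\ a \in kfaces K k.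
Proof.
move=> AF aA; apply: kfaces_sub (kfaces_face AF) (subD1set A a) _.
by move: (kfaces_card AF); rewrite (cardsD1 a) aA => -[].
Qed.

Lemma facet_over (A : {set T}) : A \in K -> exists2 B, B \in kfaces K n & A \subset B.
Proof.
move=> AK.
have AA : (A \in K) && (A \subset A) by rewrite AK subxx.
case: (@arg_maxnP _ A (fun B => (B \in K) && (A \subset B)) (fun B => #|B|) AA).
move=> B /andP [BK AB] Bmax; exists B => //; rewrite inE BK /=.
case: cK => _ _ _ _ maxcard; rewrite (maxcard B BK) //.
move=> C CK BC; have := Bmax C; rewrite CK (subset_trans AB BC) => /(_ isT) CB.
by apply/esym/eqP; rewrite eqEcard BC.
Qed.

Lemma vertex_facet x : vertex K x -> exists2 A, A \in kfaces K n & x \in A.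
Proof. by move=> /facet_over [A AF]; rewrite sub1set => xA; exists A. Qed.

Lemma face_vertex (A : {set T}) x : A \in K -> x \in A -> vertex K x.
Proof.
move=> AK xA; apply: face_sub AK _ _; first by rewrite sub1set.
by apply/set0Pn; exists x; rewrite inE.
Qed.

Lemma skelC x y : skel K x y = skel K y x.
Proof. by rewrite /skel eq_sym setUC. Qed.

Lemma skel_face (A : {set T}) x y : A \in K -> x \in A -> y \in A -> x != y -> skel K x y.
Proof.
move=> AK xA yA xy; rewrite /skel xy; apply: face_sub AK _ _.
  by rewrite subUset !sub1set xA yA.
by apply/set0Pn; exists x; rewrite !inE eqxx.
Qed.

Lemma facet_adj_diff (A B : {set T}) : A \in kfaces K n -> B \in kfaces K n ->
  n <= #|A :&: B| -> A != B -> exists2 a, a \in A :\: B & A :\ a \subset B.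
Proof.
move=> AF BF nAB AB.
have AB0 : A :\: B != set0.
  by apply: contra AB; rewrite setD_eq0 eqEcard (kfaces_card AF) (kfaces_card BF) leqnn andbT.
have /cards1P [a Ba] : #|A :\: B| == 1.
  have := cardsID B A; rewrite (kfaces_card AF) -card_gt0 in AB0 *; move: AB0; lia.
exists a; first by rewrite Ba set11.
apply/subsetP => x; rewrite inE => /andP [xa xA]; apply: contraNT xa => xB.
by rewrite -Ba inE xB.
Qed.

Lemma cardS_setD_eq (X C : {set T}) x y : X \subset C -> #|C| = #|X|.+1 ->
  x \in C :\: X -> y \in C :\: X -> x = y.
Proof.
move=> XC cC /setDP [xC xX] /setDP [yC yX].
have xXC : x |: X = C.
  by apply/eqP; rewrite eqEcard subUset sub1set xC XC cC cardsU1 xX add1n leqnn.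
by move: yC; rewrite -xXC in_setU1 (negbTE yX) orbF => /eqP.
Qed.

End Complex.

Section Closed.
Variables (T : finType) (n : nat) (K : {set {set T}}).
Hypothesis clK : closed_complex n K.

Lemma closed_other (R P : {set T}) : R \in kfaces K n.-1 -> P \in star K n R ->
  exists2 Q, Q \in star K n R & Q != P.
Proof.
move=> RF PS; have := clK RF; rewrite (cardsD1 P) PS add1n => -[] /eqP /cards1P [Q eQ].
have : Q \in star K n R :\ P by rewrite eQ set11.
by rewrite in_setD1 => /andP [QP QS]; exists Q.
Qed.

Lemma closed_star_uniq (R P Q S : {set T}) : R \in kfaces K n.-1 ->
  P \in star K n R -> Q \in star K n R -> S \in star K n R -> P != Q -> P != S -> Q = S.
Proof.
move=> RF PR QR SR PQ PS; apply/eqP/negP => /negP QS.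
have := clK RF; rewrite (cardsD1 P) (cardsD1 Q (_ :\ P)) (cardsD1 S (_ :\ Q)).
by rewrite !in_setD1 PR QR SR ![_ == P]eq_sym PQ PS [S == Q]eq_sym QS.
Qed.

End Closed.

Section CocktailParty.
Variables (T : finType) (K : {set {set T}}).

Definition antipodal x y := [&& vertex K x, vertex K y, x != y & ~~ skel K x y].

Lemma antipodalC x y : antipodal x y = antipodal y x.
Proof. by rewrite /antipodal skelC eq_sym; case: (vertex K x); case: (vertex K y). Qed.

Hypothesis antipodal_uniq : forall x y z, antipodal x y -> antipodal x z -> y = z.
Hypothesis antipodal_common : forall x y, antipodal x y -> exists z, skel K x z && skel K z y.

Lemma skel_dist x y k : vertex K x -> vertex K y -> is_dist (skel K) x y k ->
  [/\ x = y -> k = 0, skel K x y -> k = 1 & antipodal x y -> k = 2].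
Proof.
move=> vx vy xyk; split=> [exy | sxy | axy].
- by subst y; apply: is_dist_uniq xyk (is_dist0 _ _).
- by apply: is_dist_uniq xyk (is_dist1 _ sxy); case/andP: sxy.
have [z /andP [sxz szy]] := antipodal_common axy.
by case/and4P: axy => _ _ xy nsxy; apply: is_dist_uniq xyk (is_dist2 xy nsxy sxz szy).
Qed.

Lemma cocktail_skel_connected : skel_connected K.
Proof.
move=> x y vx vy; case: (eqVneq x y) => [-> // | xy].
case: (boolP (skel K x y)) => sxy; first exact: connect1.
have [z /andP [sxz szy]] : exists z, skel K x z && skel K z y.
  by apply: antipodal_common; rewrite /antipodal vx vy xy.
exact: connect_trans (connect1 sxz) (connect1 szy).
Qed.

Definition pair_rep x :=
  if [pick y | antipodal x y] is Some y then
    (if enum_rank y < enum_rank x then y else x) else x.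

Definition pair_flip x := pair_rep x != x.

Definition cube_bit x (f : {ffun T -> bool}) := f (pair_rep x) (+) pair_flip x.

Lemma pair_repP x : pair_rep x = x \/ antipodal x (pair_rep x).
Proof.
rewrite /pair_rep; case: pickP => [y axy | _]; last by left.
by case: ifP => _; [right | left].
Qed.

Lemma pair_rep_antipodal x y : antipodal x y ->
  pair_rep x = pair_rep y /\ pair_flip x != pair_flip y.
Proof.
move=> axy; have ayx : antipodal y x by rewrite antipodalC.
have xy : x != y by case/and4P: axy.
have pick_partner u w : antipodal u w -> [pick z | antipodal u z] = Some w.
  move=> auw; case: pickP => [z auz | none]; first by rewrite (antipodal_uniq auz auw).
  by move: (none w); rewrite auw.
rewrite /pair_flip /pair_rep (pick_partner _ _ axy) (pick_partner _ _ ayx).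
case: (ltngtP (enum_rank y) (enum_rank x)) => [_|_|/val_inj/enum_rank_inj eyx].
- by rewrite eqxx [y == x]eq_sym xy.
- by rewrite eqxx xy.
- by rewrite eyx eqxx in xy.
Qed.

Lemma pair_rep_skel x y : skel K x y -> pair_rep x != pair_rep y.
Proof.
move=> sxy; have xy : x != y by case/andP: sxy.
have naxy : ~~ antipodal x y by rewrite /antipodal sxy !andbF.
apply/eqP => exy.
case: (pair_repP x) => [ex | ax]; case: (pair_repP y) => [ey | ay].
- by rewrite -ex exy ey eqxx in xy.
- by move: ay; rewrite -exy ex antipodalC (negbTE naxy).
- by move: ax; rewrite exy ey (negbTE naxy).
- rewrite exy antipodalC in ax; rewrite antipodalC in ay.
  by rewrite (antipodal_uniq ax ay) eqxx in xy.
Qed.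

Lemma card_cube_bit_skel x y : skel K x y ->
  #|[set f | cube_bit x f != cube_bit y f]| * 2 = 2 ^ #|T|.
Proof.
move=> sxy; rewrite -(card_xor_eq (~~ (pair_flip x (+) pair_flip y)) (pair_rep_skel sxy)).
congr (_ * _); apply: eq_card => f; rewrite !inE /cube_bit.
by case: (f (pair_rep x)); case: (f (pair_rep y)); case: (pair_flip x); case: (pair_flip y).
Qed.

Lemma card_cube_bit_antipodal x y : antipodal x y ->
  #|[set f | cube_bit x f != cube_bit y f]| = 2 ^ #|T|.
Proof.
move=> axy; have [erep flip_neq] := pair_rep_antipodal axy.
have -> : [set f | cube_bit x f != cube_bit y f] = setT.
  apply/setP => f; rewrite !inE /cube_bit erep.
  by move: flip_neq; case: (f (pair_rep y)); case: (pair_flip x); case: (pair_flip y).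
by rewrite cardsT card_ffun card_bool.
Qed.

Definition cube_point x : {ffun 'I_#|{ffun T -> bool}| -> bool} :=
  [ffun i => cube_bit x (enum_val i)].

Lemma hamming_cube_point x y :
  hamming (cube_point x) (cube_point y) = #|[set f | cube_bit x f != cube_bit y f]|.
Proof.
rewrite -(card_enum_val (fun f => cube_bit x f != cube_bit y f)).
by apply: eq_card => i; rewrite !inE !ffunE.
Qed.

Lemma cocktail_embeddable : embeddable K (2 ^ #|T|.-1).
Proof.
split; first exact: cocktail_skel_connected.
exists #|{ffun T -> bool}|, cube_point => x y k vx vy xyk.
have [dist0 dist1 dist2] := skel_dist vx vy xyk.
rewrite hamming_cube_point.
have e2 : 2 ^ #|T| = 2 ^ #|T|.-1 * 2.
  by rewrite -expnSr prednK //; apply/card_gt0P; exists x.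
case: (eqVneq x y) => [exy | xy].
  by rewrite -exy (dist0 exy) muln0; apply: eq_card0 => f; rewrite inE eqxx.
case: (boolP (skel K x y)) => sxy.
  apply/eqP; rewrite (dist1 sxy) muln1 -(eqn_pmul2r (isT : 0 < 2)).
  by rewrite (card_cube_bit_skel sxy) -e2.
have axy : antipodal x y by rewrite /antipodal vx vy xy sxy.
by rewrite (card_cube_bit_antipodal axy) (dist2 axy) e2 mulnC.
Qed.

End CocktailParty.

Section TypeThreeFour.
Variables (T : finType) (n : nat) (K : {set {set T}}).
Hypotheses (n3 : 3 <= n) (cK : is_complex n K) (clK : closed_complex n K).
Hypothesis t34 : type34 n K.

(* The link of an (n-2)-face is 2-regular with 3 or 4 edges, i.e. a triangle or a
   square, so the path A, B, C in the star of E closes up with one more facet. *)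
Lemma type34_closes (E A B C : {set T}) b v :
  E \in kfaces K (n - 2) -> A \in star K n E -> B \in star K n E -> C \in star K n E ->
  b \in B :\: (A :|: C) -> v \in C :\: (A :|: B) ->
  exists2 D, D \in kfaces K n & b |: (v |: E) \subset D.
Proof.
have ridge_card : (n - 2).+2 = n.-1.+1 by lia.
move=> EF /setIdP [AF EA] /setIdP [BF EB] /setIdP [CF EC].
move=> /setDP [bB]; rewrite in_setU negb_or => /andP [bA bC].
move=> /setDP [vC]; rewrite in_setU negb_or => /andP [vA vB].
have bE : b \notin E by apply: contra bA; apply: (subsetP EA).
have vE : v \notin E by apply: contra vA; apply: (subsetP EA).
have inS P : P \in kfaces K n -> E \subset P -> P \in star K n E by move=> *; apply/setIdP.
have ridge (u : T) (P : {set T}) : P \in kfaces K n -> E \subset P -> u \in P -> u \notin E ->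
    u |: E \in kfaces K n.-1 /\ P \in star K n (u |: E).
  move=> PF EP uP uE; have uEP : u |: E \subset P by rewrite subUset sub1set uP EP.
  split; last exact/setIdP.
  apply: (kfaces_sub cK (kfaces_face PF) uEP).
  by rewrite cardsU1 uE (kfaces_card EF) /= add1n ridge_card.
have [bEF BbE] := ridge b B BF EB bB bE.
have [vEF CvE] := ridge v C CF EC vC vE.
have [D /setIdP [DF bED] DB] := closed_other clK bEF BbE.
have [D' /setIdP [D'F vED'] D'C] := closed_other clK vEF CvE.
move: bED vED'; rewrite !subUset !sub1set => /andP [bD ED] /andP [vD' ED'].
case: (eqVneq D' D) => [eD | D'D].
  by exists D => //; rewrite !subUset !sub1set bD -eD vD' ED'.
have : 5 <= #|star K n E|.
  apply/card_geqP; exists [:: D'; D; C; B; A]; split=> //; last first.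
    by apply/allP; rewrite /= (inS A) ?(inS B) ?(inS C) ?(inS D) ?(inS D').
  rewrite /= !inE !negb_or D'D D'C DB (mem_set_neq vD' vB) (mem_set_neq vD' vA).
  by rewrite (mem_set_neq bD bC) (mem_set_neq bD bA) (mem_set_neq vC vB) (mem_set_neq vC vA)
    (mem_set_neq bB bA).
by case: (t34 EF) => ->.
Qed.

Let ridge_D1 (A : {set T}) a : A \in kfaces K n -> a \in A -> A :\ a \in kfaces K n.-1.
Proof. by move=> AF; apply: (kfaces_D1 cK); rewrite prednK // (leq_trans _ n3). Qed.

Definition near_facet v (A : {set T}) :=
  v \in A \/ exists a C, [/\ a \in A, C \in kfaces K n, v \in C & A :\ a \subset C].

(* The facets A, B, C share the (n-2)-face A :\ a :\ a0, around which
   [type34_closes] provides the facet D through b and v. *)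
Lemma near_facet_rotate (A B C : {set T}) a a0 b v :
  A \in kfaces K n -> B \in kfaces K n -> C \in kfaces K n ->
  a \in A :\: B -> b \in B :\: A -> A :\ a \subset B -> B :\ b \subset A ->
  a0 \in A -> a0 != a -> A :\ a0 \subset C -> v \in C :\: (A :|: B) ->
  exists2 D, D \in kfaces K n & (v \in D) && (B :\ a0 \subset D).
Proof.
have en : (n - 2).+2 = n by lia.
move=> AF BF CF /setDP [aA aB] bBA AaB BbA a0A a0a AC vCAB.
have a0Aa : a0 \in A :\ a by rewrite in_setD1 a0a.
set E := A :\ a :\ a0.
have EF : E \in kfaces K (n - 2).
  by rewrite /E; apply: (kfaces_D1 cK _ a0Aa); apply: (kfaces_D1 cK _ aA); rewrite en.
have EA : E \subset A by apply: subset_trans (subD1set _ _) (subD1set _ _).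
have EB : E \subset B by apply: subset_trans (subD1set _ _) AaB.
have EC : E \subset C.
  apply/subsetP => x; rewrite !in_setD1 => /and3P [xa0 _ xA].
  by apply: (subsetP AC); rewrite in_setD1 xa0.
have /setDP [bB bA] := bBA.
have /setDP [vC] := vCAB; rewrite in_setU negb_or => /andP [vA vB].
have bC : b \notin C.
  have cC : #|C| = #|A :\ a0|.+1.
    rewrite (kfaces_card CF); move: (kfaces_card AF).
    by rewrite (cardsD1 a0 A) a0A add1n => -[->].
  apply: contra vB => bC; suff -> : v = b by [].
  by apply: (cardS_setD_eq AC cC); rewrite !inE ?vC ?bC ?(negbTE vA) ?(negbTE bA) andbF.
have inS P : P \in kfaces K n -> E \subset P -> P \in star K n E by move=> *; apply/setIdP.
have bBAC : b \in B :\: (A :|: C) by rewrite inE bB in_setU negb_or bA bC.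
have [D DF bvED] := type34_closes EF (inS A AF EA) (inS B BF EB) (inS C CF EC) bBAC vCAB.
move: bvED; rewrite !subUset !sub1set => /and3P [bD vD ED].
exists D => //; rewrite vD; apply/subsetP => x; rewrite in_setD1 => /andP [xa0 xB].
case: (eqVneq x b) => [-> // | xb].
apply: (subsetP ED); rewrite !in_setD1 xa0 (subsetP BbA) ?andbT; last by rewrite in_setD1 xb.
by apply: contraNneq aB => <-.
Qed.

Lemma near_facet_step v (A B : {set T}) :
  facet_adj n K A B -> near_facet v A -> near_facet v B.
Proof.
move=> /and3P [AF BF nAB] nearA; case: (eqVneq A B) => [<- // | AB].
have [a aAB AaB] := facet_adj_diff AF BF nAB AB.
have [nBA BA] : n <= #|B :&: A| /\ B != A by rewrite setIC eq_sym.
have [b bBA BbA] := facet_adj_diff BF AF nBA BA.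
case: (boolP (v \in B)) => vB; [by left | right].
case: (boolP (v \in A)) => vA; first by exists b, A; case/setDP: bBA.
case: nearA => [vA' | [a0 [C [a0A CF vC AC]]]]; first by rewrite vA' in vA.
have vCAB : v \in C :\: (A :|: B) by rewrite inE vC in_setU negb_or vA vB.
have a0a : a0 != a.
  apply: contraNneq vB => a0a; rewrite {a0}a0a in a0A AC.
  have inR P : P \in kfaces K n -> A :\ a \subset P -> P \in star K n (A :\ a).
    by move=> *; apply/setIdP.
  have AC' : A != C by rewrite eq_sym (mem_set_neq vC vA).
  by rewrite (closed_star_uniq clK (ridge_D1 AF a0A) (inR A AF (subD1set A a))
    (inR B BF AaB) (inR C CF AC) AB AC').
have [D DF /andP [vD BD]] :=
  near_facet_rotate AF BF CF aAB bBA AaB BbA a0A a0a AC vCAB.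
by exists a0, D; split=> //; rewrite (subsetP AaB) // in_setD1 a0a.
Qed.

Lemma near_facet_all v (A0 A : {set T}) : strongly_connected n K ->
  A0 \in kfaces K n -> v \in A0 -> A \in kfaces K n -> near_facet v A.
Proof.
move=> sc A0F vA0 AF; have /connectP [p adj ->] := sc _ _ A0F AF.
have : near_facet v A0 by left.
elim: p A0 {A0F vA0} adj => [|B p IH] A0 //= /andP [A0B adj] nearA0.
exact: IH adj (near_facet_step A0B nearA0).
Qed.

Hypothesis sc : strongly_connected n K.

Lemma facet_across v u (A : {set T}) : vertex K v -> A \in kfaces K n -> u \in A ->
  u != v -> ~~ skel K u v -> exists2 C, C \in kfaces K n & (v \in C) && (A :\ u \subset C).
Proof.
move=> vv AF uA uv nuv; have [A0 A0F vA0] := vertex_facet cK vv.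
case: (near_facet_all sc A0F vA0 AF) => [vA | [a [C [aA CF vC AC]]]].
  by rewrite (skel_face cK (kfaces_face AF) uA vA uv) in nuv.
case: (eqVneq a u) => [<- | au]; first by exists C; rewrite ?vC.
have uC : u \in C by apply: (subsetP AC); rewrite in_setD1 eq_sym au.
by rewrite (skel_face cK (kfaces_face CF) uC vC uv) in nuv.
Qed.

(* Two non-neighbours y, z of x would give three facets A, C, D through the ridge
   A :\ y, reached by moving A across to x and then C across to z. *)
Lemma antipodal_uniq x y z : antipodal K x y -> antipodal K x z -> y = z.
Proof.
move=> /and4P [vx vy xy nsxy] /and4P [_ vz xz nsxz]; apply/eqP/negP => /negP yz.
have yx : y != x by rewrite eq_sym.
have nsyx : ~~ skel K y x by rewrite skelC.
have [A AF yA] := vertex_facet cK vy.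
have [C CF /andP [xC AC]] := facet_across vx AF yA yx nsyx.
have [D DF /andP [zD CD]] := facet_across vz CF xC xz nsxz.
have xA : x \notin A.
  by apply: contra nsyx => xA; apply: (skel_face cK (kfaces_face AF) yA xA yx).
have zA : z \notin A.
  apply: contra nsxz => zA.
  have zC : z \in C by apply: (subsetP AC); rewrite in_setD1 eq_sym yz.
  exact: (skel_face cK (kfaces_face CF) xC zC xz).
have xD : x \notin D.
  by apply: contra nsxz => xD; apply: (skel_face cK (kfaces_face DF) xD zD xz).
have AD : A :\ y \subset D.
  apply/subsetP => w wAy; apply: (subsetP CD); rewrite in_setD1 (subsetP AC) // andbT.
  by apply: contraNneq xA => wx; move: wAy; rewrite wx in_setD1 => /andP [].
have inR P : P \in kfaces K n -> A :\ y \subset P -> P \in star K n (A :\ y).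
  by move=> *; apply/setIdP.
have AC' : A != C by rewrite eq_sym (mem_set_neq xC xA).
have AD' : A != D by rewrite eq_sym (mem_set_neq zD zA).
have CD' := closed_star_uniq clK (ridge_D1 AF yA) (inR A AF (subD1set A y)) (inR C CF AC)
  (inR D DF AD) AC' AD'.
by rewrite -CD' xC in xD.
Qed.

Lemma antipodal_common x y : antipodal K x y -> exists z, skel K x z && skel K z y.
Proof.
move=> axy; have /and4P [vx vy xy nsxy] := axy.
have [A AF xA] := vertex_facet cK vx.
have : 0 < #|A :\ x :\ y|.
  have := cardsD1 y (A :\ x); have := cardsD1 x A; rewrite xA (kfaces_card AF).
  by case: (y \in A :\ x) => /=; clear -n3; lia.
case/card_gt0P => z; rewrite !in_setD1 => /and3P [zy zx zA].
have sxz : skel K x z by apply: (skel_face cK (kfaces_face AF) xA zA); rewrite eq_sym.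
exists z; rewrite sxz /=; apply: contraT => nszy.
have ayz : antipodal K y z.
  by rewrite /antipodal vy (face_vertex cK (kfaces_face AF) zA) eq_sym zy skelC.
by rewrite (antipodal_uniq ayz (_ : antipodal K y x)) ?eqxx // antipodalC in zx.
Qed.

Lemma type34_embeddable : exists2 lam, 0 < lam & embeddable K lam.
Proof.
exists (2 ^ #|T|.-1); first by rewrite expn_gt0.
exact: cocktail_embeddable antipodal_uniq antipodal_common.
Qed.

End TypeThreeFour.

Section LinkCycle.
Variables (T : finType) (n : nat) (K : {set {set T}}) (F : {set T}).
Variables (a0 : T) (c' : seq T).
Hypotheses (n3 : 3 <= n) (cK : is_complex n K) (FF : F \in kfaces K (n - 2)).

(* Writing the cycle as a0 :: c' supplies the default element of [nth]. *)
Let c := a0 :: c'.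
Hypothesis cyc : is_cycle_graph (link n K F) c.

Let m := size c.
Let cc i := nth a0 c i.
Let nx i := if i.+1 == m then 0 else i.+1.

Let c_uniq : uniq c. Proof. by case: cyc. Qed.
Let m_ge3 : 3 <= m. Proof. by case: cyc. Qed.

Lemma nx_lt i : i < m -> nx i < m.
Proof. by rewrite /nx; case: eqP => [_ _ | ne lt]; [apply: leq_trans m_ge3 | lia]. Qed.

Lemma nxS i : i.+1 < m -> nx i = i.+1.
Proof. by rewrite /nx => lt; case: eqP => // e; rewrite e ltnn in lt. Qed.

Lemma next_cc i : i < m -> next c (cc i) = cc (nx i).
Proof.
move=> im; rewrite next_nth mem_nth // index_uniq //= /nx /cc.
by case: eqP => [e|_] //; rewrite nth_default //; move: e; rewrite /m /= => -[->].
Qed.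

Lemma cc_eq i j : i < m -> j < m -> (cc i == cc j) = (i == j).
Proof. by move=> im jm; rewrite nth_uniq. Qed.

Lemma linkC u w : link n K F u w = link n K F w u.
Proof. by rewrite /link eq_sym (setUC [set u]); case: (u \in F); case: (w \in F). Qed.

Lemma link_cc i j : i < m -> j < m -> link n K F (cc i) (cc j) = (j == nx i) || (i == nx j).
Proof. by case: cyc => _ _ -> im jm; rewrite mem_nth // !next_cc // !cc_eq ?nx_lt. Qed.

Lemma link_cc_nx i : i < m -> link n K F (cc i) (cc (nx i)).
Proof. by move=> im; rewrite link_cc ?nx_lt // eqxx. Qed.

Lemma link_in_cycle u w : link n K F u w -> exists2 k, k < m & w = cc k.
Proof.
rewrite linkC; case: cyc => _ _ -> /andP [wc _].
by exists (index w c); rewrite ?index_mem // /cc nth_index.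
Qed.

Lemma link_facet u w : link n K F u w -> F :|: [set u; w] \in kfaces K n.
Proof. by case/and4P. Qed.

Lemma link_notin u w : link n K F u w -> u \notin F.
Proof. by case/and4P. Qed.

Lemma star_link_card : #|star K n F| <= m.
Proof.
have cF : #|F| = n.-1 by rewrite (kfaces_card FF); lia.
suff sub : star K n F \subset [set F :|: [set u; next c u] | u in c].
  by rewrite (leq_trans (subset_leq_card sub)) // (leq_trans (leq_imset_card _ _)) ?card_size.
apply/subsetP => A /setIdP [AF FA].
have /cards2P [u [w [uw eD]]] : #|A :\: F| == 2.
  by have := cardsID F A; rewrite (setIidPr FA) cF (kfaces_card AF); lia.
have eA : A = F :|: [set u; w] by rewrite -eD -{1}(setIidPr FA) setID.
have /setDP [_ uF] : u \in A :\: F by rewrite eD !inE eqxx.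
have /setDP [_ wF] : w \in A :\: F by rewrite eD !inE eqxx orbT.
have luw : link n K F u w by rewrite /link uw uF wF -eA AF.
have [_ _ linkE] := cyc.
move: (luw); rewrite linkE => /andP [uc /orP [/eqP wu | /eqP uw']].
  by apply/imsetP; exists u; rewrite // eA wu.
have wc : w \in c by move: luw; rewrite linkC linkE => /andP [].
by apply/imsetP; exists w; rewrite // eA uw' (setUC [set next c w]).
Qed.

Lemma cc_notin_F j : j < m -> cc j \notin F.
Proof. by move=> jm; apply: link_notin (link_cc_nx jm). Qed.

Lemma skel_cc_F j x : j < m -> x \in F -> skel K (cc j) x.
Proof.
move=> jm xF; have AK := kfaces_face (link_facet (link_cc_nx jm)).
apply: (skel_face cK AK); rewrite ?inE ?xF ?eqxx ?orbT //.
by apply: contraNneq (cc_notin_F jm) => ->.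
Qed.

Lemma vertex_cc j : j < m -> vertex K (cc j).
Proof.
move=> jm; apply: (face_vertex cK (kfaces_face (link_facet (link_cc_nx jm)))).
by rewrite !inE eqxx orbT.
Qed.

Lemma link_dist_nx2 j : m = 5 -> j < 5 -> is_dist (link n K F) (cc j) (cc (nx (nx j))) 2.
Proof.
move=> m5 j5; have jm : j < m by rewrite m5.
have nxjm := nx_lt jm; have nx2jm := nx_lt nxjm.
apply: (is_dist2 (z := cc (nx j))); last 2 first.
- exact: link_cc_nx.
- exact: link_cc_nx.
- by rewrite (cc_eq jm nx2jm) /nx m5; case: j j5 {jm nxjm nx2jm} => [|[|[|[|[|]]]]].
by rewrite (link_cc jm nx2jm) /nx m5; case: j j5 {jm nxjm nx2jm} => [|[|[|[|[|]]]]].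
Qed.

Lemma link_C5_not_embeddable lam : 0 < lam -> m = 5 ->
  isometric_in_skel K (link n K F) c -> ~ embeddable K lam.
Proof.
move=> lam0 m5 iso [_ [N [phi dist_phi]]].
have /card_gt1P [x1 [x2 [x1F x2F x12]]] : 1 < #|F| by rewrite (kfaces_card FF); lia.
have ham1 j x : j < 5 -> x \in F -> hamming (phi (cc j)) (phi x) = lam * 1.
  move=> j5 xF; have jm : j < m by rewrite m5.
  apply: dist_phi (vertex_cc jm) _ (is_dist1 _ (skel_cc_F jm xF)).
    exact: (face_vertex cK (kfaces_face FF) xF).
  by apply: contraNneq (cc_notin_F jm) => ->.
have ham2 j k : j < 5 -> k = nx (nx j) -> hamming (phi (cc j)) (phi (cc k)) = lam * 2.
  move=> j5 ->; have jm : j < m by rewrite m5.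
  have nx2jm := nx_lt (nx_lt jm).
  apply: dist_phi (vertex_cc jm) (vertex_cc nx2jm) _.
  by apply: iso (link_dist_nx2 m5 j5); rewrite /cc mem_nth.
have ham12 : hamming (phi x1) (phi x2) = lam * 1.
  have FK := kfaces_face FF.
  exact: dist_phi (face_vertex cK FK x1F) (face_vertex cK FK x2F)
    (is_dist1 x12 (skel_face cK FK x1F x2F x12)).
have [e0 e1 e2 e3 e4] : [/\ 2 = nx (nx 0), 3 = nx (nx 1), 4 = nx (nx 2), 0 = nx (nx 3)
  & 1 = nx (nx 4)] by rewrite /nx m5.
have := hamming_pentagon (phi x1) (phi x2) (phi (cc 0)) (phi (cc 1)) (phi (cc 2))
  (phi (cc 3)) (phi (cc 4)).
rewrite ham12 (ham2 0 2) ?(ham2 1 3) ?(ham2 2 4) ?(ham2 3 0) ?(ham2 4 1) //.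
rewrite ![hamming (phi x1) _]hammingC ![hamming (phi x2) _]hammingC !ham1 //; lia.
Qed.

Lemma link_dist_03 : 6 <= m -> is_dist (link n K F) (cc 0) (cc 3) 3.
Proof.
move=> m6; have lt i : i < 6 -> i < m by move=> i6; apply: leq_trans m6.
have [nx0 nx1 nx2 nx3] : [/\ nx 0 = 1, nx 1 = 2, nx 2 = 3 & nx 3 = 4].
  by rewrite !nxS ?(leq_trans _ m6).
apply: (is_dist3 (z1 := cc 1) (z2 := cc 2)).
- by rewrite cc_eq ?lt.
- by rewrite link_cc ?lt // nx0 nx3.
- move=> z l0z; have [k km ekz] := link_in_cycle l0z; move: l0z.
  rewrite ekz (link_cc (lt 0 isT) km) (link_cc km (lt 3 isT)) nx0 nx3 /nx.
  by case: (eqVneq k.+1 m) => e; case/orP=> /eqP h; apply/negP; case/orP => /eqP h'; lia.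
- by rewrite -nx0; apply: link_cc_nx; rewrite lt.
- by rewrite -nx1; apply: link_cc_nx; rewrite lt.
by rewrite -nx2; apply: link_cc_nx; rewrite lt.
Qed.

Lemma link_cycle6_not_isometric : 6 <= m -> ~ isometric_in_skel K (link n K F) c.
Proof.
move=> m6 iso; have lt i : i < 6 -> i < m by move=> i6; apply: leq_trans m6.
have [_ shortest] :=
  iso _ _ _ (mem_nth a0 (lt 0 isT)) (mem_nth a0 (lt 3 isT)) (link_dist_03 m6).
have /card_gt0P [x xF] : 0 < #|F| by rewrite (kfaces_card FF).
suff /shortest /(_ erefl) : path (skel K) (cc 0) [:: x; cc 3] by [].
apply/andP; split; first exact: (skel_cc_F (lt 0 isT) xF).
by apply/andP; split; rewrite // skelC (skel_cc_F (lt 3 isT) xF).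
Qed.

Lemma link_cycle_not_embeddable : 5 <= #|star K n F| ->
  isometric_in_skel K (link n K F) c -> forall lam, 0 < lam -> ~ embeddable K lam.
Proof.
move=> star5 iso lam lam0; have m5 := leq_trans star5 star_link_card.
case: (ltngtP m 5) => [|m6|m_eq5]; first by rewrite ltnNge m5.
  by case: (link_cycle6_not_isometric m6 iso).
exact: link_C5_not_embeddable.
Qed.

End LinkCycle.

Theorem theorem4p1 (T : finType) (n : nat) (K : {set {set T}}) :
  3 <= n -> is_complex n K -> closed_complex n K ->
  (forall F : {set T}, F \in kfaces K (n - 2) -> 5 <= #|star K n F| ->
     (exists c : seq T, is_cycle_graph (link n K F) c /\
                        isometric_in_skel K (link n K F) c) ->
     forall lam : nat, 0 < lam -> ~ embeddable K lam) /\
  (strongly_connected n K -> type34 n K ->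
     exists2 lam : nat, 0 < lam & embeddable K lam).
Proof.
move=> n3 cK clK; split.
  move=> F FF star5 [[|a0 c'] [cyc iso]]; first by case: cyc.
  exact: (link_cycle_not_embeddable n3 cK FF cyc star5 iso).
by move=> sc t34; apply: (type34_embeddable n3 cK clK t34 sc).
Qed.
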